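(* Let $0<\alpha<1$, let $\Gamma$ be a Jordan curve of class $C^{1+\alpha}$, and let $\eta\in C^{1+\alpha}(\Gamma)$ be such that $\eta(\Gamma)=\mathbb{T}$ and $\eta^{-1}:\mathbb{T}\to\Gamma$ exists and is differentiable. Fix any pseudoanalytic extension of $\eta$ to $\mathbb{C}$, also denoted $\eta$. Then there is a neighborhood $U$ of $\Gamma$ such that $\eta:U\to\eta(U)$ is a $C^1$ diffeomorphism, $\eta(U)$ is a neighborhood of $\mathbb{T}$, and $\eta$ is bi-Lipschitz in $U$: there are constants $c,C>0$ with $$c|z-w|\le|\eta(z)-\eta(w)|\le C|z-w|,\qquad z,w\in U.$$
   Context: $\mathbb{T}$ is the unit circle. A Jordan curve $\Gamma$ is of class $C^{1+\alpha}$ if $\Gamma=\psi(\mathbb{T})$ for a bijection $\psi:\mathbb{T}\to\Gamma$ with $\psi\in C^1(\mathbb{T})$, $\psi'$ nowhere vanishing and $\psi'$ Hölder of order $\alpha$. A function $f:\Gamma\to\mathbb{C}$ belongs to $C^{1+\alpha}(\Gamma)$ if $f\circ\psi\in C^1(\mathbb{T})$ and $(f\circ\psi)'$ is Hölder of order $\alpha$. A pseudoanalytic extension of $f\in C^{1+\alpha}(\Gamma)$ is a function $F\in C^1(\mathbb{C})$ with $F|_\Gamma=f$ and $\left|\frac{\partial F}{\partial\bar z}(z)\right|\le C_f\operatorname{dist}(z,\Gamma)^\alpha$ for all $z\in\mathbb{C}$, for some constant $C_f$, where $\frac{\partial}{\partial\bar z}=\frac12\left(\frac{\partial}{\partial x}+i\frac{\partial}{\partial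 y}\right)$. Such extensions always exist. *)

From Stdlib Require Import Reals.
From Coquelicot Require Import Coquelicot.
Open Scope R_scope.

(* x^a for x >= 0 with the convention 0^a = 0 (a > 0). *)
Definition hpow (x a : R) : R := if Rle_dec x 0 then 0 else Rpower x a.

Definition onT (z : C) : Prop := Cmod z = 1.
Definition circ (t : R) : C := (cos t, sin t).

(* a function h on T, seen as a 2pi-periodic function of the angle *)
Definition lift (h : C -> C) (t : R) : C := h (circ t).

Definition cderiv (G : R -> C) (t : R) : C :=
  (Derive (fun s => fst (G s)) t, Derive (fun s => snd (G s)) t).

Definition differentiable_curve_at (G : R -> C) (t : R) : Prop :=
  ex_derive (fun s => fst (G s)) t /\ ex_derive (fun s => snd (G s)) t.

Definition C1_T (h : C -> C) : Prop :=
  forall t, differentiable_curve_at (lift h) t /\ continuous (cderiv (lift h)) t.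

Definition holder (a : R) (G : R -> C) : Prop :=
  exists K : R, forall s t, Cmod (Cminus (G s) (G t)) <= K * hpow (Rabs (s - t)) a.

Definition C1a_T (a : R) (h : C -> C) : Prop :=
  C1_T h /\ holder a (cderiv (lift h)).

Definition jordan_C1a (a : R) (Gamma : C -> Prop) (psi : C -> C) : Prop :=
  (forall z, onT z -> Gamma (psi z)) /\
  (forall w, Gamma w -> exists z, onT z /\ psi z = w) /\
  (forall z1 z2, onT z1 -> onT z2 -> psi z1 = psi z2 -> z1 = z2) /\
  C1a_T a psi /\
  (forall t, cderiv (lift psi) t <> 0%C).

Definition C1a_Gamma (a : R) (psi : C -> C) (f : C -> C) : Prop :=
  C1a_T a (fun z => f (psi z)).

Definition dx (u : C -> R) (z : C) : R := Derive (fun t => u (t, snd z)) (fst z).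
Definition dy (u : C -> R) (z : C) : R := Derive (fun t => u (fst z, t)) (snd z).

Definition C1_on_R (V : C -> Prop) (u : C -> R) : Prop :=
  forall z, V z ->
    ex_derive (fun t => u (t, snd z)) (fst z) /\
    ex_derive (fun t => u (fst z, t)) (snd z) /\
    continuous (dx u) z /\ continuous (dy u) z.

Definition C1_on (V : C -> Prop) (F : C -> C) : Prop :=
  C1_on_R V (fun z => fst (F z)) /\ C1_on_R V (fun z => snd (F z)).

(* dF/dzbar = 1/2 (F_x + i F_y) *)
Definition dbar (F : C -> C) (z : C) : C :=
  let u := fun w => fst (F w) in
  let v := fun w => snd (F w) in
  ((dx u z - dy v z) / 2, (dx v z + dy u z) / 2).

Definition dist_set (Gamma : C -> Prop) (z : C) : R :=
  real (Glb_Rbar (fun r => exists w, Gamma w /\ r = Cmod (Cminus z w))).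

Definition pseudoanalytic_ext (a : R) (Gamma : C -> Prop) (f F : C -> C) : Prop :=
  C1_on (fun _ => True) F /\
  (forall z, Gamma z -> F z = f z) /\
  exists Cf : R, forall z, Cmod (dbar F z) <= Cf * hpow (dist_set Gamma z) a.

(* On [Gamma] the distance to [Gamma] vanishes, so the pseudoanalytic bound gives [dbar eta = 0]
   there: at [p] in [Gamma] the Jacobian of [eta] is multiplication by a complex number
   [eta'(p)], which is nonzero because [eta o gam = circ] for the differentiable
   parametrization [gam = eta^-1 o circ] of [Gamma]. By continuity of the partial derivatives,
   near [p] the map [eta] stays within [|eta'(p)|/2] of the similarity [z |-> eta'(p) z]; there
   it is bi-Lipschitz, open (Newton's iteration with frozen derivative converges) and has
   positive Jacobian determinant. Compactness of [Gamma] makes the radius uniform, and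
   injectivity of [eta] on [Gamma] separates the images of distant points, so [eta] is
   bi-Lipschitz on a thin tube around [Gamma]. Its inverse on the image is Lipschitz, so the
   linearization of [eta] inverts to show that it is differentiable, with derivative the
   inverse Jacobian, which is continuous. *)

From Stdlib Require Import Reals Lra Lia Psatz ClassicalEpsilon Classical.
From Coquelicot Require Import Coquelicot.
Open Scope R_scope.

Definition box (p : C) (r : R) (z : C) : Prop :=
  Rabs (fst z - fst p) < r /\ Rabs (snd z - snd p) < r.

Lemma ball_box (p z : C) (r : R) : ball p r z <-> box p r z.
Proof.
  destruct p, z; unfold box, ball; simpl.
  unfold prod_ball, AbsRing_ball, abs, minus, plus, opp; simpl; tauto.
Qed.

Lemma Cminus_fst (z w : C) : fst (Cminus z w) = fst z - fst w.
Proof. destruct z, w; simpl; ring. Qed.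

Lemma Cminus_snd (z w : C) : snd (Cminus z w) = snd z - snd w.
Proof. destruct z, w; simpl; ring. Qed.

Lemma Rabs_fst_le_Cmod (z : C) : Rabs (fst z) <= Cmod z.
Proof. eapply Rle_trans; [apply Rmax_l | apply Rmax_Cmod]. Qed.

Lemma Rabs_snd_le_Cmod (z : C) : Rabs (snd z) <= Cmod z.
Proof. eapply Rle_trans; [apply Rmax_r | apply Rmax_Cmod]. Qed.

Lemma Cmod_sqr (z : C) : Cmod z * Cmod z = fst z * fst z + snd z * snd z.
Proof. destruct z as [x y]; unfold Cmod; simpl. rewrite sqrt_sqrt; nra. Qed.

Lemma Cmod_le_Rabs_fst_snd (z : C) : Cmod z <= Rabs (fst z) + Rabs (snd z).
Proof.
  assert (Hx := Rabs_pos (fst z)); assert (Hy := Rabs_pos (snd z)).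
  apply Rsqr_incr_0_var; [| lra]. unfold Rsqr. rewrite Cmod_sqr.
  pose proof (Rsqr_abs (fst z)); pose proof (Rsqr_abs (snd z)).
  unfold Rsqr in *; nra.
Qed.

Lemma Cmod_minus_triangle (x y z : C) : Cmod (Cminus x z) <= Cmod (Cminus x y) + Cmod (Cminus y z).
Proof.
  replace (Cminus x z) with (Cplus (Cminus x y) (Cminus y z)) by (unfold Cminus; ring).
  apply Cmod_triangle.
Qed.

Lemma Cmod_minus_sym (x y : C) : Cmod (Cminus x y) = Cmod (Cminus y x).
Proof. rewrite <- Copp_minus_distr. apply Cmod_opp. Qed.

Lemma Cmod_minus_diag (x : C) : Cmod (Cminus x x) = 0.
Proof. replace (Cminus x x) with (RtoC 0) by (unfold Cminus; ring). apply Cmod_0. Qed.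

Lemma Cmod_minus_le (x y : C) : Cmod (Cminus x y) <= Cmod x + Cmod y.
Proof. unfold Cminus. rewrite <- (Cmod_opp y). apply Cmod_triangle. Qed.

Lemma Cmod_minus_eq_0 (x y : C) : Cmod (Cminus x y) <= 0 -> x = y.
Proof.
  intros H. apply Ceq_minus, Cmod_eq_0. generalize (Cmod_ge_0 (Cminus x y)); lra.
Qed.

Lemma box_center (p : C) (r : R) : 0 < r -> box p r p.
Proof. intros Hr; split; rewrite Rminus_diag, Rabs_R0; exact Hr. Qed.

Lemma box_weaken (p z : C) (r r' : R) : r <= r' -> box p r z -> box p r' z.
Proof. intros H [H1 H2]; split; lra. Qed.

Lemma box_sym (p z : C) (r : R) : box p r z -> box z r p.
Proof. intros [H1 H2]; split; rewrite Rabs_minus_sym; assumption. Qed.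

Lemma box_trans (p q z : C) (r s : R) : box p r q -> box q s z -> box p (r + s) z.
Proof.
  intros [H1 H2] [H3 H4]; split.
  - replace (fst z - fst p) with ((fst z - fst q) + (fst q - fst p)) by ring.
    eapply Rle_lt_trans; [apply Rabs_triang | lra].
  - replace (snd z - snd p) with ((snd z - snd q) + (snd q - snd p)) by ring.
    eapply Rle_lt_trans; [apply Rabs_triang | lra].
Qed.

Lemma box_interior (q z : C) (r : R) :
  box q r z -> exists e, 0 < e /\ forall y, box z e y -> box q r y.
Proof.
  intros [H1 H2].
  exists (Rmin (r - Rabs (fst z - fst q)) (r - Rabs (snd z - snd q))).
  split; [apply Rmin_pos; lra |].
  intros y [H3 H4].
  assert (H5 := Rlt_le_trans _ _ _ H3 (Rmin_l _ _)).
  assert (H6 := Rlt_le_trans _ _ _ H4 (Rmin_r _ _)).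
  split.
  - replace (fst y - fst q) with ((fst y - fst z) + (fst z - fst q)) by ring.
    eapply Rle_lt_trans; [apply Rabs_triang | lra].
  - replace (snd y - snd q) with ((snd y - snd z) + (snd z - snd q)) by ring.
    eapply Rle_lt_trans; [apply Rabs_triang | lra].
Qed.

Lemma box_Cmod_lt (p z : C) (r : R) : box p r z -> Cmod (Cminus z p) < 2 * r.
Proof.
  intros [H1 H2]. eapply Rle_lt_trans; [apply Cmod_le_Rabs_fst_snd |].
  rewrite Cminus_fst, Cminus_snd; lra.
Qed.

Lemma Cmod_lt_box (p z : C) (r : R) : Cmod (Cminus z p) < r -> box p r z.
Proof.
  intros H; split.
  - generalize (Rabs_fst_le_Cmod (Cminus z p)); rewrite Cminus_fst; lra.
  - generalize (Rabs_snd_le_Cmod (Cminus z p)); rewrite Cminus_snd; lra.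
Qed.

Lemma not_box_Cmod_ge (z w : C) (r : R) : ~ box z r w -> r <= Cmod (Cminus w z).
Proof.
  intros H. apply Rnot_lt_le; intros Hlt. apply H, Cmod_lt_box, Hlt.
Qed.

Lemma ex_derive_continuity_pt (f : R -> R) (x : R) : ex_derive f x -> continuity_pt f x.
Proof.
  intros H. apply continuity_pt_filterlim.
  apply (ex_derive_continuous (K := R_AbsRing) (V := R_NormedModule) f x H).
Qed.

Lemma continuous_box (f : C -> R) (p : C) : continuous f p ->
  forall eps, 0 < eps -> exists r, 0 < r /\ forall z, box p r z -> Rabs (f z - f p) < eps.
Proof.
  intros Hc eps He.
  destruct (proj1 (filterlim_locally f (f p)) Hc (mkposreal eps He)) as [r Hr].
  exists r; split; [apply cond_pos |].
  intros z Hz; apply (Hr z), ball_box, Hz.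
Qed.

Lemma mean_value_affine_bound (f df : R -> R) (a b l eps : R) :
  (forall t, Rmin a b <= t <= Rmax a b -> is_derive f t (df t)) ->
  (forall t, Rmin a b <= t <= Rmax a b -> Rabs (df t - l) <= eps) ->
  Rabs (f b - f a - l * (b - a)) <= eps * Rabs (b - a).
Proof.
  intros Hd Hb.
  destruct (MVT_gen (fun t => f t - l * t) a b (fun t => df t - l)) as [c [Hc Heq]].
  - intros x Hx. apply (is_derive_minus f (fun t => l * t)); [apply Hd; lra |].
    auto_derive; auto; ring.
  - intros x Hx. apply (continuity_pt_minus f (fun t => l * t)).
    + apply ex_derive_continuity_pt. eexists; apply Hd; lra.
    + apply ex_derive_continuity_pt. auto_derive; auto.
  - replace (f b - f a - l * (b - a)) with (f b - l * b - (f a - l * a)) by ring.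
    simpl in Heq. rewrite Heq, Rabs_mult.
    apply Rmult_le_compat_r; [apply Rabs_pos | apply Hb; lra].
Qed.

Lemma derivable_pt_lim_lipschitz_at (f : R -> R) (x l : R) : derivable_pt_lim f x l ->
  exists del, 0 < del /\
    forall h, Rabs h < del -> Rabs (f (x + h) - f x) <= (Rabs l + 1) * Rabs h.
Proof.
  intros H. destruct (H 1 Rlt_0_1) as [del Hd].
  exists del; split; [apply cond_pos |].
  intros h Hh. destruct (Req_dec h 0) as [->|Hh0].
  - rewrite Rplus_0_r, Rminus_diag, Rabs_R0; lra.
  - specialize (Hd h Hh0 Hh).
    replace (f (x + h) - f x) with (((f (x + h) - f x) / h - l) * h + l * h) by (field; auto).
    eapply Rle_trans; [apply Rabs_triang |]. rewrite !Rabs_mult.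
    generalize (Rabs_pos h) (Rabs_pos l); nra.
Qed.

Definition has_partials (u : C -> R) : Prop := forall z : C,
  ex_derive (fun t => u (t, snd z)) (fst z) /\ ex_derive (fun t => u (fst z, t)) (snd z).

Lemma Rabs_between_lt (a b x c r : R) : Rmin a b <= x <= Rmax a b ->
  Rabs (a - c) < r -> Rabs (b - c) < r -> Rabs (x - c) < r.
Proof.
  intros Hx Ha Hb. unfold Rmin, Rmax in Hx.
  apply Rabs_def2 in Ha; apply Rabs_def2 in Hb; apply Rabs_def1; destruct Rle_dec; lra.
Qed.

(* Move horizontally from [z] to [(fst w, snd z)], then vertically to [w], staying in the box. *)
Lemma increment_affine_bound (u : C -> R) (p : C) (r a b eps : R) :
  has_partials u ->
  (forall z, box p r z -> Rabs (dx u z - a) <= eps /\ Rabs (dy u z - b) <= eps) ->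
  forall z w, box p r z -> box p r w ->
  Rabs (u w - u z - (a * (fst w - fst z) + b * (snd w - snd z)))
    <= eps * (Rabs (fst w - fst z) + Rabs (snd w - snd z)).
Proof.
  intros Hu Hb [z1 z2] [w1 w2] [Hz1 Hz2] [Hw1 Hw2]; simpl in *.
  assert (E1 : Rabs (u (w1, z2) - u (z1, z2) - a * (w1 - z1)) <= eps * Rabs (w1 - z1)).
  { apply (mean_value_affine_bound (fun t => u (t, z2)) (fun t => dx u (t, z2))).
    - intros t _. apply Derive_correct, (proj1 (Hu (t, z2))).
    - intros t Ht. apply (Hb (t, z2)); split; simpl; [apply (Rabs_between_lt z1 w1) |]; auto. }
  assert (E2 : Rabs (u (w1, w2) - u (w1, z2) - b * (w2 - z2)) <= eps * Rabs (w2 - z2)).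
  { apply (mean_value_affine_bound (fun t => u (w1, t)) (fun t => dy u (w1, t))).
    - intros t _. apply Derive_correct, (proj2 (Hu (w1, t))).
    - intros t Ht. apply (Hb (w1, t)); split; simpl; [| apply (Rabs_between_lt z2 w2)]; auto. }
  replace (u (w1, w2) - u (z1, z2) - (a * (w1 - z1) + b * (w2 - z2))) with
    ((u (w1, z2) - u (z1, z2) - a * (w1 - z1)) + (u (w1, w2) - u (w1, z2) - b * (w2 - z2)))
    by ring.
  eapply Rle_trans; [apply Rabs_triang | lra].
Qed.

Lemma strict_deriv_of_continuous_partials (u : C -> R) (p : C) :
  has_partials u -> continuous (dx u) p -> continuous (dy u) p ->
  forall eps, 0 < eps -> exists r, 0 < r /\ forall z w, box p r z -> box p r w ->
    Rabs (u w - u z - (dx u p * (fst w - fst z) + dy u p * (snd w - snd z)))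
      <= eps * Cmod (Cminus w z).
Proof.
  intros Hu Hx Hy eps He.
  destruct (continuous_box _ _ Hx (eps / 2)) as [r1 [Hr1 H1]]; [lra |].
  destruct (continuous_box _ _ Hy (eps / 2)) as [r2 [Hr2 H2]]; [lra |].
  exists (Rmin r1 r2); split; [apply Rmin_pos; auto |].
  intros z w Hz Hw.
  eapply Rle_trans; [apply (increment_affine_bound u p (Rmin r1 r2) _ _ (eps / 2)); auto |].
  - intros y Hy'. split; left.
    + apply H1, (box_weaken _ _ _ _ (Rmin_l r1 r2) Hy').
    + apply H2, (box_weaken _ _ _ _ (Rmin_r r1 r2) Hy').
  - generalize (Rabs_fst_le_Cmod (Cminus w z)) (Rabs_snd_le_Cmod (Cminus w z)).
    rewrite Cminus_fst, Cminus_snd. intros; nra.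
Qed.

Lemma derivable_pt_lim_comp_flat (u : C -> R) (G1 G2 : R -> R) (t0 : R) :
  ex_derive G1 t0 -> ex_derive G2 t0 ->
  (forall eps, 0 < eps -> exists r, 0 < r /\ forall z, box (G1 t0, G2 t0) r z ->
     Rabs (u z - u (G1 t0, G2 t0)) <= eps * Cmod (Cminus z (G1 t0, G2 t0))) ->
  derivable_pt_lim (fun t => u (G1 t, G2 t)) t0 0.
Proof.
  intros [l1 H1] [l2 H2] Hu eps He.
  apply is_derive_Reals in H1; apply is_derive_Reals in H2.
  destruct (derivable_pt_lim_lipschitz_at _ _ _ H1) as [d1 [Hd1 L1]].
  destruct (derivable_pt_lim_lipschitz_at _ _ _ H2) as [d2 [Hd2 L2]].
  set (K := Rabs l1 + Rabs l2 + 2).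
  assert (HK : 0 < K) by (unfold K; generalize (Rabs_pos l1) (Rabs_pos l2); lra).
  destruct (Hu (eps / (2 * K))) as [r [Hr Hur]]; [apply Rdiv_lt_0_compat; lra |].
  assert (Hpos : 0 < Rmin (Rmin d1 d2) (r / K)).
  { repeat apply Rmin_pos; auto. apply Rdiv_lt_0_compat; lra. }
  exists (mkposreal _ Hpos). intros h Hh0 Hh; simpl in Hh.
  assert (Hh12 : Rabs h < Rmin d1 d2) by (eapply Rlt_le_trans; [exact Hh | apply Rmin_l]).
  assert (Hh1 : Rabs h < d1) by (eapply Rlt_le_trans; [exact Hh12 | apply Rmin_l]).
  assert (Hh2 : Rabs h < d2) by (eapply Rlt_le_trans; [exact Hh12 | apply Rmin_r]).
  assert (HhK : K * Rabs h < r).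
  { apply (Rmult_lt_reg_r (/ K)); [apply Rinv_0_lt_compat; lra |].
    replace (K * Rabs h * / K) with (Rabs h) by (field; lra).
    eapply Rlt_le_trans; [exact Hh | apply Rmin_r]. }
  specialize (L1 h Hh1); specialize (L2 h Hh2).
  assert (Hhp : 0 < Rabs h) by (apply Rabs_pos_lt; auto).
  set (z := (G1 (t0 + h), G2 (t0 + h))).
  assert (Hz : Cmod (Cminus z (G1 t0, G2 t0)) <= K * Rabs h).
  { eapply Rle_trans; [apply Cmod_le_Rabs_fst_snd |].
    rewrite Cminus_fst, Cminus_snd; unfold K; simpl; lra. }
  assert (Hb : box (G1 t0, G2 t0) r z) by (apply Cmod_lt_box; lra).
  specialize (Hur z Hb).
  rewrite Rminus_0_r, Rabs_div by auto.
  apply (Rmult_lt_reg_r (Rabs h)); [assumption |].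
  unfold Rdiv; rewrite Rmult_assoc, Rinv_l, Rmult_1_r by lra.
  eapply Rle_lt_trans; [apply Hur |].
  apply (Rle_lt_trans _ (eps / (2 * K) * (K * Rabs h))).
  - apply Rmult_le_compat_l; [left; apply Rdiv_lt_0_compat |]; lra.
  - replace (eps / (2 * K) * (K * Rabs h)) with (eps * Rabs h / 2) by (field; lra). nra.
Qed.

Lemma is_derive_partials_of_frechet (u : C -> R) (p : C) (a b : R) :
  (forall eps, 0 < eps -> exists r, 0 < r /\ forall z, box p r z ->
     Rabs (u z - u p - (a * (fst z - fst p) + b * (snd z - snd p))) <= eps * Cmod (Cminus z p)) ->
  is_derive (fun t => u (t, snd p)) (fst p) a /\ is_derive (fun t => u (fst p, t)) (snd p) b.
Proof.
  intros Hu.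
  assert (Hline : forall (e1 e2 l : R), l = a * e1 + b * e2 -> Rabs e1 + Rabs e2 = 1 ->
    forall eps, 0 < eps -> exists del : posreal, forall h, h <> 0 -> Rabs h < del ->
      Rabs ((u (fst p + h * e1, snd p + h * e2) - u p) / h - l) < eps).
  { intros e1 e2 l El He eps Heps.
    destruct (Hu (eps / 2)) as [r [Hr H]]; [lra |].
    exists (mkposreal r Hr); intros h Hh0 Hh; simpl in Hh.
    set (z := (fst p + h * e1, snd p + h * e2)).
    assert (Hz : Cmod (Cminus z p) <= Rabs h).
    { eapply Rle_trans; [apply Cmod_le_Rabs_fst_snd |].
      rewrite Cminus_fst, Cminus_snd; unfold z; simpl.
      replace (fst p + h * e1 - fst p) with (h * e1) by ring.
      replace (snd p + h * e2 - snd p) with (h * e2) by ring.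
      rewrite !Rabs_mult; nra. }
    assert (Hhp : 0 < Rabs h) by (apply Rabs_pos_lt; auto).
    assert (Hb : box p r z) by (apply Cmod_lt_box; lra).
    specialize (H z Hb).
    replace ((u z - u p) / h - l) with ((u z - u p - (a * (fst z - fst p) + b * (snd z - snd p))) / h)
      by (rewrite El; unfold z; simpl; field; auto).
    rewrite Rabs_div by auto.
    apply (Rmult_lt_reg_r (Rabs h)); [assumption |].
    unfold Rdiv; rewrite Rmult_assoc, Rinv_l, Rmult_1_r by lra. nra. }
  split; apply is_derive_Reals; intros eps Heps.
  - destruct (Hline 1 0 a ltac:(ring) ltac:(rewrite Rabs_R1, Rabs_R0; ring) eps Heps) as [del H].
    exists del; intros h Hh0 Hh. specialize (H h Hh0 Hh).
    rewrite Rmult_1_r, Rmult_0_r, Rplus_0_r in H. destruct p; exact H.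
  - destruct (Hline 0 1 b ltac:(ring) ltac:(rewrite Rabs_R1, Rabs_R0; ring) eps Heps) as [del H].
    exists del; intros h Hh0 Hh. specialize (H h Hh0 Hh).
    rewrite Rmult_1_r, Rmult_0_r, Rplus_0_r in H. destruct p; exact H.
Qed.

Definition lin2 (a b c d : R) (h : C) : C := (a * fst h + b * snd h, c * fst h + d * snd h).

Definition lin2_inv (a b c d : R) : C -> C :=
  lin2 (d / (a * d - b * c)) (- b / (a * d - b * c)) (- c / (a * d - b * c)) (a / (a * d - b * c)).

Lemma Cmod_lin2_le (a b c d : R) (h : C) :
  Cmod (lin2 a b c d h) <= (Rabs a + Rabs b + Rabs c + Rabs d) * Cmod h.
Proof.
  eapply Rle_trans; [apply Cmod_le_Rabs_fst_snd |]. unfold lin2; simpl.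
  assert (Hb : forall x y, Rabs y <= Cmod h -> Rabs (x * y) <= Rabs x * Cmod h).
  { intros x y Hy. rewrite Rabs_mult. apply Rmult_le_compat_l; [apply Rabs_pos | exact Hy]. }
  assert (H1 := Rabs_fst_le_Cmod h); assert (H2 := Rabs_snd_le_Cmod h).
  generalize (Hb a _ H1) (Hb b _ H2) (Hb c _ H1) (Hb d _ H2)
    (Rabs_triang (a * fst h) (b * snd h)) (Rabs_triang (c * fst h) (d * snd h)).
  lra.
Qed.

(* [h - A^-1 k = - A^-1 (k - A h)], hence the bound. *)
Lemma lin2_inv_residual_le (a b c d : R) : a * d - b * c <> 0 -> exists K, 0 < K /\
  forall h k, Cmod (Cminus h (lin2_inv a b c d k)) <= K * Cmod (Cminus k (lin2 a b c d h)).
Proof.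
  intros HD. unfold lin2_inv.
  set (a' := d / (a * d - b * c)); set (b' := - b / (a * d - b * c));
  set (c' := - c / (a * d - b * c)); set (d' := a / (a * d - b * c)).
  exists (Rabs a' + Rabs b' + Rabs c' + Rabs d' + 1); split.
  { generalize (Rabs_pos a') (Rabs_pos b') (Rabs_pos c') (Rabs_pos d'); lra. }
  intros h k.
  replace (Cminus h (lin2 a' b' c' d' k)) with (Copp (lin2 a' b' c' d' (Cminus k (lin2 a b c d h)))).
  - rewrite Cmod_opp. eapply Rle_trans; [apply Cmod_lin2_le |].
    apply Rmult_le_compat_r; [apply Cmod_ge_0 | lra].
  - destruct h, k. unfold a', b', c', d', lin2, Cminus, Cplus, Copp; simpl; f_equal; field; auto.
Qed.


Lemma lin2_frechet_partials (G : C -> C) (w0 : C) (a b c d : R) :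
  (forall eps, 0 < eps -> exists r, 0 < r /\ forall w, box w0 r w ->
     Cmod (Cminus (Cminus (G w) (G w0)) (lin2 a b c d (Cminus w w0))) <= eps * Cmod (Cminus w w0)) ->
  (is_derive (fun t => fst (G (t, snd w0))) (fst w0) a /\
   is_derive (fun t => fst (G (fst w0, t))) (snd w0) b) /\
  (is_derive (fun t => snd (G (t, snd w0))) (fst w0) c /\
   is_derive (fun t => snd (G (fst w0, t))) (snd w0) d).
Proof.
  intros HG.
  assert (Hcomp : forall pr : C -> R, (forall x, Rabs (pr x) <= Cmod x) ->
            (forall x y, pr (Cminus x y) = pr x - pr y) ->
            forall al be, (forall h, pr (lin2 a b c d h) = al * fst h + be * snd h) ->
            is_derive (fun t => pr (G (t, snd w0))) (fst w0) al /\
            is_derive (fun t => pr (G (fst w0, t))) (snd w0) be).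
  { intros pr Hpr Hlin al be Hl.
    apply (is_derive_partials_of_frechet (fun w => pr (G w))); intros eps He.
    destruct (HG eps He) as [r [Hr H]]. exists r; split; [exact Hr |].
    intros z Hz. eapply Rle_trans; [| apply (H z Hz)].
    rewrite <- Cminus_fst, <- Cminus_snd, <- Hl, <- !Hlin. apply Hpr. }
  split; [apply (Hcomp fst) | apply (Hcomp snd)];
    auto using Rabs_fst_le_Cmod, Rabs_snd_le_Cmod, Cminus_fst, Cminus_snd.
Qed.

Definition near_similarity (F : C -> C) (a : C) (S : C -> Prop) : Prop :=
  forall z w, S z -> S w ->
    Cmod (Cminus (Cminus (F w) (F z)) (Cmult a (Cminus w z))) <= Cmod a / 2 * Cmod (Cminus w z).

Lemma near_similarity_subset (F : C -> C) (a : C) (S S' : C -> Prop) :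
  (forall z, S' z -> S z) -> near_similarity F a S -> near_similarity F a S'.
Proof. intros Hsub HF z w Hz Hw. apply HF; auto. Qed.

Lemma near_similarity_bilipschitz (F : C -> C) (a : C) (S : C -> Prop) (z w : C) :
  near_similarity F a S -> S z -> S w ->
  Cmod a / 2 * Cmod (Cminus w z) <= Cmod (Cminus (F w) (F z)) <= 3 * Cmod a / 2 * Cmod (Cminus w z).
Proof.
  intros HF Hz Hw. specialize (HF z w Hz Hw).
  set (D := Cminus w z) in *; set (E := Cminus (F w) (F z)) in *.
  assert (T1 : Cmod E <= Cmod (Cminus E (Cmult a D)) + Cmod a * Cmod D).
  { rewrite <- Cmod_mult. replace E with (Cplus (Cminus E (Cmult a D)) (Cmult a D)) at 1
      by (unfold Cminus; ring). apply Cmod_triangle. }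
  assert (T2 : Cmod a * Cmod D <= Cmod (Cminus E (Cmult a D)) + Cmod E).
  { rewrite <- Cmod_mult, <- (Cmod_opp (Cminus E (Cmult a D))).
    replace (Cmult a D) with (Cplus (Copp (Cminus E (Cmult a D))) E) at 1 by (unfold Cminus; ring).
    apply Cmod_triangle. }
  lra.
Qed.

Lemma half_pow_antitone (n m : nat) : (n <= m)%nat -> (1/2) ^ m <= (1/2) ^ n.
Proof.
  induction 1 as [| m _ IH]; [lra |].
  simpl; assert (0 <= (1/2) ^ m) by (apply pow_le; lra); lra.
Qed.

Lemma half_pow_small (y : R) : 0 < y -> exists N, forall n, (N <= n)%nat -> (1/2) ^ n < y.
Proof.
  intros Hy. destruct (pow_lt_1_zero (1/2)) with y as [N HN]; auto.
  { rewrite Rabs_right; lra. }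
  exists N; intros n Hn. specialize (HN n Hn).
  rewrite Rabs_right in HN; [exact HN | apply Rle_ge, pow_le; lra].
Qed.

Lemma le_0_of_le_half_pow (x K : R) : (forall n, x <= K * (1/2) ^ n) -> x <= 0.
Proof.
  intros H. apply Rnot_lt_le; intros Hx.
  assert (HK : 0 < K) by (specialize (H O); simpl in H; lra).
  destruct (half_pow_small (x / K)) as [N HN]; [apply Rdiv_lt_0_compat; auto |].
  specialize (HN N (Nat.le_refl N)); specialize (H N).
  apply (Rmult_lt_compat_l K) in HN; [| exact HK].
  replace (K * (x / K)) with x in HN by (field; lra). lra.
Qed.

Section Geometric.

Variables (zs : nat -> C) (d0 : R).
Hypothesis steps : forall n, Cmod (Cminus (zs (S n)) (zs n)) <= d0 * (1/2) ^ n.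

Lemma geometric_scale_nonneg : 0 <= d0.
Proof. generalize (steps O) (Cmod_ge_0 (Cminus (zs 1%nat) (zs O))); simpl; lra. Qed.

Lemma geometric_telescope (n j : nat) :
  Cmod (Cminus (zs (n + j)%nat) (zs n)) <= 2 * d0 * ((1/2) ^ n - (1/2) ^ (n + j)).
Proof.
  induction j as [| j IH].
  - rewrite Nat.add_0_r, Cmod_minus_diag; lra.
  - rewrite Nat.add_succ_r. eapply Rle_trans; [apply (Cmod_minus_triangle _ (zs (n + j)%nat)) |].
    specialize (steps (n + j)%nat). simpl pow. lra.
Qed.

Lemma geometric_tail (n m : nat) : (n <= m)%nat -> Cmod (Cminus (zs m) (zs n)) <= 2 * d0 * (1/2) ^ n.
Proof.
  intros Hnm. replace m with (n + (m - n))%nat by lia.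
  eapply Rle_trans; [apply geometric_telescope |].
  assert (0 <= (1/2) ^ (n + (m - n))) by (apply pow_le; lra).
  generalize geometric_scale_nonneg; nra.
Qed.

Lemma geometric_converges : exists l, forall eps, 0 < eps ->
  exists N, forall n, (N <= n)%nat -> Cmod (Cminus l (zs n)) < eps.
Proof.
  assert (Hcauchy : forall pr : C -> R, (forall x, Rabs (pr x) <= Cmod x) ->
            (forall x y, pr (Cminus x y) = pr x - pr y) -> Cauchy_crit (fun n => pr (zs n))).
  { intros pr Hpr Hlin eps He.
    assert (Hd0 := geometric_scale_nonneg).
    destruct (half_pow_small (eps / (2 * d0 + 1))) as [N HN]; [apply Rdiv_lt_0_compat; lra |].
    exists N; intros n m Hn Hm. unfold R_dist; rewrite <- Hlin.
    eapply Rle_lt_trans; [apply Hpr |].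
    assert (Htail : forall i j, (N <= i <= j)%nat -> Cmod (Cminus (zs i) (zs j)) < eps).
    { intros i j Hij. rewrite Cmod_minus_sym.
      eapply Rle_lt_trans; [apply geometric_tail; lia |].
      assert (Hi := half_pow_antitone N i ltac:(lia)); specialize (HN N (Nat.le_refl N)).
      assert (0 <= (1/2) ^ i) by (apply pow_le; lra).
      apply (Rmult_lt_compat_l (2 * d0 + 1)) in HN; [| lra].
      replace ((2 * d0 + 1) * (eps / (2 * d0 + 1))) with eps in HN by (field; lra).
      nra. }
    destruct (Nat.le_ge_cases n m).
    - apply Htail; lia.
    - rewrite Cmod_minus_sym; apply Htail; lia. }
  destruct (Rcomplete.R_complete _ (Hcauchy fst Rabs_fst_le_Cmod Cminus_fst)) as [l1 Hl1].
  destruct (Rcomplete.R_complete _ (Hcauchy snd Rabs_snd_le_Cmod Cminus_snd)) as [l2 Hl2].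
  exists (l1, l2); intros eps He.
  destruct (Hl1 (eps / 2)) as [N1 H1]; [lra |]. destruct (Hl2 (eps / 2)) as [N2 H2]; [lra |].
  exists (Nat.max N1 N2); intros n Hn.
  specialize (H1 n ltac:(lia)); specialize (H2 n ltac:(lia)). unfold R_dist in H1, H2.
  eapply Rle_lt_trans; [apply Cmod_le_Rabs_fst_snd |].
  rewrite Cminus_fst, Cminus_snd, (Rabs_minus_sym (fst _)), (Rabs_minus_sym (snd _)); simpl; lra.
Qed.

Lemma geometric_limit : exists l, forall n, Cmod (Cminus l (zs n)) <= 2 * d0 * (1/2) ^ n.
Proof.
  destruct geometric_converges as [l Hl]. exists l; intros n.
  apply le_epsilon; intros eps He. destruct (Hl eps He) as [N HN].
  set (m := Nat.max n N).
  eapply Rle_trans; [apply (Cmod_minus_triangle _ (zs m)) |].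
  generalize (HN m ltac:(unfold m; lia)) (geometric_tail n m ltac:(unfold m; lia)). lra.
Qed.

End Geometric.

Section Newton.

Variables (F : C -> C) (a z0 w : C) (R0 : R).
Hypothesis a_neq_0 : a <> 0%C.
Hypothesis F_similar : near_similarity F a (fun z => Cmod (Cminus z z0) <= R0).
Hypothesis w_close : 2 * Cmod (Cminus w (F z0)) <= Cmod a * R0.

Let newton (z : C) : C := Cplus z (Cdiv (Cminus w (F z)) a).
Let iterate (n : nat) : C := Nat.iter n newton z0.
Let d0 := Cmod (Cminus w (F z0)) / Cmod a.

Lemma newton_scale_nonneg : 0 <= d0.
Proof. unfold d0; apply Rdiv_le_0_compat; [apply Cmod_ge_0 | apply Cmod_gt_0, a_neq_0]. Qed.

Lemma newton_radius : 2 * d0 <= R0.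
Proof.
  assert (Ha : 0 < Cmod a) by (apply Cmod_gt_0; auto).
  unfold d0. apply (Rmult_le_reg_r (Cmod a)); [exact Ha |].
  replace (2 * (Cmod (Cminus w (F z0)) / Cmod a) * Cmod a) with (2 * Cmod (Cminus w (F z0)))
    by (field; lra). lra.
Qed.

Lemma newton_contracts (z z' : C) :
  Cmod (Cminus z z0) <= R0 -> Cmod (Cminus z' z0) <= R0 ->
  Cmod (Cminus (newton z) (newton z')) <= / 2 * Cmod (Cminus z z').
Proof.
  intros Hz Hz'. specialize (F_similar z' z Hz' Hz).
  replace (Cminus (newton z) (newton z')) with
    (Cdiv (Copp (Cminus (Cminus (F z) (F z')) (Cmult a (Cminus z z')))) a)
    by (unfold newton, Cminus, Cdiv; field; auto).
  assert (Ha : 0 < Cmod a) by (apply Cmod_gt_0; auto).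
  rewrite Cmod_div, Cmod_opp by auto.
  apply (Rmult_le_reg_r (Cmod a)); [exact Ha |].
  unfold Rdiv; rewrite Rmult_assoc, Rinv_l, Rmult_1_r by lra. lra.
Qed.

Lemma newton_iterates (n : nat) :
  Cmod (Cminus (iterate (S n)) (iterate n)) <= d0 * (1/2) ^ n /\
  Cmod (Cminus (iterate n) z0) <= 2 * d0 * (1 - (1/2) ^ n).
Proof.
  assert (Hd0 := newton_radius). assert (Hd0' := newton_scale_nonneg).
  induction n as [| n [IH1 IH2]].
  - simpl; rewrite Cmod_minus_diag. split; [| lra].
    replace (Cminus (newton z0) z0) with (Cdiv (Cminus w (F z0)) a)
      by (unfold newton, Cminus, Cdiv; field; auto).
    rewrite Cmod_div by auto. unfold d0; lra.
  - assert (0 <= (1/2) ^ n) by (apply pow_le; lra).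
    assert (IH3 : Cmod (Cminus (iterate (S n)) z0) <= 2 * d0 * (1 - (1/2) ^ S n)).
    { eapply Rle_trans; [apply (Cmod_minus_triangle _ (iterate n)) |]. simpl pow; lra. }
    split; [| exact IH3].
    change (iterate (S (S n))) with (newton (iterate (S n))).
    change (iterate (S n)) with (newton (iterate n)) at 2.
    eapply Rle_trans; [apply newton_contracts |].
    + simpl pow in IH3; nra.
    + nra.
    + simpl pow; lra.
Qed.

Lemma near_similarity_surjective : exists z, Cmod (Cminus z z0) <= R0 /\ F z = w.
Proof.
  assert (Ha := Cmod_ge_0 a).
  destruct (geometric_limit iterate d0 (fun n => proj1 (newton_iterates n))) as [l Hl].
  assert (Hd0 := newton_radius). assert (Hd0' := newton_scale_nonneg).
  assert (Hl0 : Cmod (Cminus l z0) <= R0) by (specialize (Hl O); simpl in Hl; lra).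
  exists l; split; [exact Hl0 |].
  apply Cmod_minus_eq_0, (le_0_of_le_half_pow _ (4 * Cmod a * d0)); intros n.
  destruct (newton_iterates n) as [Hstep Hin].
  assert (0 <= (1/2) ^ n) by (apply pow_le; lra).
  assert (Hin' : Cmod (Cminus (iterate n) z0) <= R0) by nra.
  assert (E1 := proj2 (near_similarity_bilipschitz F a _ (iterate n) l F_similar Hin' Hl0)).
  assert (E2 : Cmod (Cminus (F (iterate n)) w) = Cmod a * Cmod (Cminus (iterate (S n)) (iterate n))).
  { rewrite <- Cmod_mult, <- Cmod_opp. f_equal.
    change (iterate (S n)) with (newton (iterate n)).
    unfold newton, Cminus, Cdiv; field; auto. }
  eapply Rle_trans; [apply (Cmod_minus_triangle _ (F (iterate n))) |].
  specialize (Hl n). rewrite E2.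
  assert (Cmod a * Cmod (Cminus l (iterate n)) <= Cmod a * (2 * d0 * (1/2) ^ n))
    by (apply Rmult_le_compat_l; lra).
  assert (Cmod a * Cmod (Cminus (iterate (S n)) (iterate n)) <= Cmod a * (d0 * (1/2) ^ n))
    by (apply Rmult_le_compat_l; lra).
  lra.
Qed.

End Newton.

Lemma onT_circ (t : R) : onT (circ t).
Proof.
  unfold onT, circ, Cmod; simpl.
  replace (cos t * (cos t * 1) + sin t * (sin t * 1)) with 1
    by (generalize (sin2_cos2 t); unfold Rsqr; lra).
  apply sqrt_1.
Qed.

Lemma onT_circ_surj (w : C) : onT w -> exists t, -PI <= t <= PI /\ circ t = w.
Proof.
  intros Hw. destruct w as [x y]. unfold onT in Hw.
  assert (H1 : x * x + y * y = 1) by (generalize (Cmod_sqr (x, y)); simpl; rewrite Hw; nra).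
  assert (Hx : -1 <= x <= 1) by (split; nra).
  assert (Hs : sqrt (1 - x²) = Rabs y).
  { rewrite <- sqrt_Rsqr_abs. f_equal. unfold Rsqr; lra. }
  generalize (acos_bound x); intros Hb.
  destruct (Rle_dec 0 y) as [Hy|Hy].
  - exists (acos x); split; [lra |]. unfold circ.
    rewrite cos_acos, sin_acos, Hs, Rabs_right by (auto; lra). reflexivity.
  - exists (- acos x); split; [lra |]. unfold circ.
    rewrite cos_neg, sin_neg, cos_acos, sin_acos, Hs, Rabs_left by (auto; lra).
    f_equal; ring.
Qed.

Lemma circ_plus_2PI (t : R) : circ (t + 2 * PI) = circ t.
Proof. unfold circ. rewrite cos_plus, sin_plus, cos_2PI, sin_2PI. f_equal; ring. Qed.

Lemma Cmod_circ_minus_sqr (t s : R) :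
  Cmod (Cminus (circ t) (circ s)) * Cmod (Cminus (circ t) (circ s)) = 2 - 2 * cos (t - s).
Proof.
  rewrite Cmod_sqr, Cminus_fst, Cminus_snd. unfold circ; simpl. rewrite cos_minus.
  generalize (sin2_cos2 t) (sin2_cos2 s); unfold Rsqr; intros; nra.
Qed.

Lemma circ_close_angle_close (del : R) : 0 < del <= PI -> exists k, 0 < k /\
  forall t s, Rabs (t - s) <= PI -> Cmod (Cminus (circ t) (circ s)) < k -> Rabs (t - s) < del.
Proof.
  intros Hd. exists (sqrt (2 - 2 * cos del)).
  assert (Hc : cos del < 1) by (rewrite <- cos_0; apply cos_decreasing_1; lra).
  split; [apply sqrt_lt_R0; lra |].
  intros t s Hts Hk. apply Rnot_le_lt; intros Hle.
  assert (Hcos : cos (t - s) <= cos del).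
  { replace (cos (t - s)) with (cos (Rabs (t - s)))
      by (unfold Rabs; destruct Rcase_abs; [apply cos_neg | reflexivity]).
    destruct (Req_dec (Rabs (t - s)) del) as [->|E]; [lra |].
    left; apply cos_decreasing_1; lra. }
  assert (sqrt (2 - 2 * cos del) <= Cmod (Cminus (circ t) (circ s))).
  { rewrite <- (sqrt_Rsqr (Cmod _)) by apply Cmod_ge_0.
    apply sqrt_le_1_alt. unfold Rsqr. rewrite Cmod_circ_minus_sqr. lra. }
  lra.
Qed.

Lemma angle_representative (t t' : R) : -PI <= t <= PI -> -PI <= t' <= PI ->
  exists t'', -(3*PI) <= t'' <= 3*PI /\ Rabs (t - t'') <= PI /\
    (t'' = t' \/ t'' = t' + 2 * PI \/ t' = t'' + 2 * PI).
Proof.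
  intros Ht Ht'.
  destruct (Rle_dec (Rabs (t - t')) PI) as [H|H]; [exists t'; repeat split; auto; lra |].
  destruct (Rle_dec 0 (t - t')) as [H0|H0].
  - rewrite Rabs_right in H by lra. exists (t' + 2 * PI).
    rewrite Rabs_left1 by lra. repeat split; auto; lra.
  - rewrite Rabs_left in H by lra. exists (t' - 2 * PI).
    rewrite Rabs_right by lra. repeat split; try lra.
Qed.

Section Curve.

Variable gam : R -> C.
Hypothesis gam_continuous : forall t,
  continuity_pt (fun s => fst (gam s)) t /\ continuity_pt (fun s => snd (gam s)) t.

Lemma curve_box (s eps : R) : 0 < eps ->
  exists rho, 0 < rho /\ forall t, Rabs (t - s) < rho -> box (gam s) eps (gam t).
Proof.
  intros He. destruct (gam_continuous s) as [C1 C2].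
  destruct (C1 eps He) as [r1 [Hr1 H1]]; destruct (C2 eps He) as [r2 [Hr2 H2]].
  exists (Rmin r1 r2); split; [apply Rmin_pos; auto |].
  intros t Ht. destruct (Req_dec t s) as [->|Hts]; [apply box_center; exact He |].
  split.
  - apply (H1 t); split; [split; [exact I | auto] | eapply Rlt_le_trans; [exact Ht | apply Rmin_l]].
  - apply (H2 t); split; [split; [exact I | auto] | eapply Rlt_le_trans; [exact Ht | apply Rmin_r]].
Qed.

Lemma curve_bounded (a b : R) : a <= b ->
  exists B, forall t, a <= t <= b -> Cmod (gam t) <= B.
Proof.
  intros Hab. set (f := fun s => Rabs (fst (gam s)) + Rabs (snd (gam s))).
  destruct (continuity_ab_maj f a b Hab) as [M [HM _]].
  { intros c _. unfold f. destruct (gam_continuous c) as [C1 C2].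
    apply continuity_pt_plus; apply (continuity_pt_comp _ Rabs); auto; apply Rcontinuity_abs. }
  exists (f M); intros t Ht. eapply Rle_trans; [apply Cmod_le_Rabs_fst_snd | apply (HM t Ht)].
Qed.

Lemma curve_lebesgue_number (a b : R) (rad : C -> R) :
  (forall t, a <= t <= b -> 0 < rad (gam t)) ->
  exists d, 0 < d /\ forall t, a <= t <= b ->
    exists s, a <= s <= b /\ box (gam s) (rad (gam s) / 2) (gam t) /\ d <= rad (gam s).
Proof.
  intros Hrad.
  set (P := fun s rho => 0 < rho /\ (a <= s <= b -> rho <= rad (gam s) /\
              forall t, Rabs (t - s) < rho -> box (gam s) (rad (gam s) / 2) (gam t))).
  assert (HP : forall s, exists rho, P s rho).
  { intros s. destruct (Rle_dec a s) as [Ha|Ha]; [destruct (Rle_dec s b) as [Hb|Hb] |].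
    - assert (Hr := Hrad s (conj Ha Hb)).
      destruct (curve_box s (rad (gam s) / 2)) as [rho [Hrho H]]; [lra |].
      exists (Rmin rho (rad (gam s))). split; [apply Rmin_pos; auto |].
      intros _; split; [apply Rmin_r |].
      intros t Ht; apply H; eapply Rlt_le_trans; [exact Ht | apply Rmin_l].
    - exists 1; split; [lra | intros; lra].
    - exists 1; split; [lra | intros; lra]. }
  set (rf := fun s => epsilon (inhabits 1) (P s)).
  assert (Hrf : forall s, P s (rf s)) by (intros s; apply epsilon_spec, HP).
  destruct (compactness_value_1d a b (fun s => mkposreal _ (proj1 (Hrf s)))) as [d Hd].
  exists d; split; [apply cond_pos |].
  intros t Ht. specialize (Hd t Ht). apply NNPP in Hd.
  destruct Hd as [s [Hs [H1 H2]]]; simpl in H1, H2.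
  destruct (proj2 (Hrf s) Hs) as [Hle Hbox].
  exists s; split; [exact Hs | split; [apply Hbox; exact H1 | lra]].
Qed.

Lemma periodic_curve_separation : (forall t, gam (t + 2 * PI) = gam t) ->
  forall d, 0 < d -> exists sg, 0 < sg /\ forall t t', -PI <= t <= PI -> -PI <= t' <= PI ->
    Cmod (Cminus (circ t) (circ t')) < sg -> box (gam t) d (gam t').
Proof.
  intros Hper d Hd. assert (HPI := PI_RGT_0).
  destruct (Heine (fun s => fst (gam s)) (fun c => -(3*PI) <= c <= 3*PI) (compact_P3 _ _)
              (fun x _ => proj1 (gam_continuous x)) (mkposreal d Hd)) as [d1 U1].
  destruct (Heine (fun s => snd (gam s)) (fun c => -(3*PI) <= c <= 3*PI) (compact_P3 _ _)
              (fun x _ => proj2 (gam_continuous x)) (mkposreal d Hd)) as [d2 U2].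
  simpl in U1, U2.
  set (del := Rmin (Rmin d1 d2) PI).
  assert (Hdel : 0 < del <= PI).
  { split; [unfold del; repeat apply Rmin_pos; try apply cond_pos; lra | apply Rmin_r]. }
  destruct (circ_close_angle_close del Hdel) as [k [Hk Hsep]].
  exists k; split; [exact Hk |]. intros t t' Ht Ht' Hc.
  destruct (angle_representative t t' Ht Ht') as [t'' [Ht'' [Htt Et'']]].
  assert (Ec : circ t'' = circ t') by (destruct Et'' as [-> | [-> | ->]]; auto using circ_plus_2PI).
  assert (Eg : gam t'' = gam t') by (destruct Et'' as [-> | [-> | ->]]; auto).
  rewrite <- Ec in Hc. specialize (Hsep t t'' Htt Hc).
  assert (H1 : Rabs (t - t'') < d1).
  { eapply Rlt_le_trans; [exact Hsep | unfold del; eapply Rle_trans; apply Rmin_l]. }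
  assert (H2 : Rabs (t - t'') < d2).
  { eapply Rlt_le_trans; [exact Hsep |]. unfold del.
    eapply Rle_trans; [apply Rmin_l | apply Rmin_r]. }
  assert (Hti : -(3*PI) <= t <= 3*PI) by lra.
  specialize (U1 t t'' Hti Ht'' H1); specialize (U2 t t'' Hti Ht'' H2).
  rewrite <- Eg. split; rewrite Rabs_minus_sym; assumption.
Qed.

End Curve.

Definition straightening_neighbourhood (Gamma : C -> Prop) (eta : C -> C) (U : C -> Prop) : Prop :=
  open U /\ (forall z, Gamma z -> U z) /\
  (forall z w, U z -> U w -> eta z = eta w -> z = w) /\
  open (fun w => exists z, U z /\ eta z = w) /\
  (forall w, onT w -> exists z, U z /\ eta z = w) /\
  (exists g : C -> C,
      (forall z, U z -> g (eta z) = z) /\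
      C1_on (fun w => exists z, U z /\ eta z = w) g) /\
  (exists c Cc : R, 0 < c /\ 0 < Cc /\
     forall z w, U z -> U w ->
       c * Cmod (Cminus z w) <= Cmod (Cminus (eta z) (eta w)) /\
       Cmod (Cminus (eta z) (eta w)) <= Cc * Cmod (Cminus z w)).

Section Straightening.

Variables (Gamma : C -> Prop) (eta etainv : C -> C).
Hypothesis eta_C1 : C1_on (fun _ => True) eta.
Hypothesis eta_Gamma_onto_T : forall w, onT w <-> exists z, Gamma z /\ eta z = w.
Hypothesis etainv_right : forall w, onT w -> Gamma (etainv w) /\ eta (etainv w) = w.
Hypothesis etainv_left : forall z, Gamma z -> etainv (eta z) = z.
Hypothesis etainv_differentiable : forall t, differentiable_curve_at (lift etainv) t.
Hypothesis dbar_eta_Gamma : forall z, Gamma z -> dbar eta z = (0, 0).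

Definition eta1 (z : C) : R := fst (eta z).
Definition eta2 (z : C) : R := snd (eta z).
Definition ux (z : C) : R := dx eta1 z.
Definition uy (z : C) : R := dy eta1 z.
Definition vx (z : C) : R := dx eta2 z.
Definition vy (z : C) : R := dy eta2 z.
Definition jac (z : C) : C -> C := lin2 (ux z) (uy z) (vx z) (vy z).
Definition jac_det (z : C) : R := ux z * vy z - uy z * vx z.
Definition jac_inv (z : C) : C -> C := lin2_inv (ux z) (uy z) (vx z) (vy z).
(* On [Gamma] the Jacobian is multiplication by this complex number. *)
Definition eta_deriv (z : C) : C := (ux z, vx z).
Definition gam (t : R) : C := etainv (circ t).

Lemma eta1_has_partials : has_partials eta1.
Proof. intros z. destruct eta_C1 as [H _]. destruct (H z I) as [H1 [H2 _]]. split; auto. Qed.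

Lemma eta2_has_partials : has_partials eta2.
Proof. intros z. destruct eta_C1 as [_ H]. destruct (H z I) as [H1 [H2 _]]. split; auto. Qed.

Lemma partials_continuous (z : C) :
  continuous ux z /\ continuous uy z /\ continuous vx z /\ continuous vy z.
Proof.
  destruct eta_C1 as [Hu Hv].
  destruct (Hu z I) as [_ [_ [H1 H2]]]; destruct (Hv z I) as [_ [_ [H3 H4]]]. tauto.
Qed.

Lemma jac_det_continuous (z : C) : continuous jac_det z.
Proof.
  destruct (partials_continuous z) as [H1 [H2 [H3 H4]]].
  apply (continuous_minus (fun z => ux z * vy z) (fun z => uy z * vx z)).
  - apply (continuous_mult ux vy); assumption.
  - apply (continuous_mult uy vx); assumption.
Qed.

Lemma eta_strict_deriv (p : C) (eps : R) : 0 < eps -> exists r, 0 < r /\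
  forall z w, box p r z -> box p r w ->
    Cmod (Cminus (Cminus (eta w) (eta z)) (jac p (Cminus w z))) <= eps * Cmod (Cminus w z).
Proof.
  intros He. destruct (partials_continuous p) as [H1 [H2 [H3 H4]]].
  destruct (strict_deriv_of_continuous_partials eta1 p eta1_has_partials H1 H2 (eps / 2))
    as [r1 [Hr1 F1]]; [lra |].
  destruct (strict_deriv_of_continuous_partials eta2 p eta2_has_partials H3 H4 (eps / 2))
    as [r2 [Hr2 F2]]; [lra |].
  exists (Rmin r1 r2); split; [apply Rmin_pos; auto |].
  intros z w Hz Hw.
  specialize (F1 z w (box_weaken _ _ _ _ (Rmin_l r1 r2) Hz) (box_weaken _ _ _ _ (Rmin_l r1 r2) Hw)).
  specialize (F2 z w (box_weaken _ _ _ _ (Rmin_r r1 r2) Hz) (box_weaken _ _ _ _ (Rmin_r r1 r2) Hw)).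
  eapply Rle_trans; [apply Cmod_le_Rabs_fst_snd |].
  unfold jac, lin2. rewrite !Cminus_fst, !Cminus_snd; cbn [fst snd].
  rewrite ?Cminus_fst, ?Cminus_snd. unfold ux, uy, vx, vy in *. unfold eta1, eta2 in *. lra.
Qed.

Lemma cauchy_riemann_Gamma (p : C) : Gamma p -> vy p = ux p /\ uy p = - vx p.
Proof.
  intros Hp. assert (H := dbar_eta_Gamma p Hp). unfold dbar in H.
  injection H; intros E2 E1. unfold ux, uy, vx, vy, eta1, eta2. split; lra.
Qed.

Lemma jac_Gamma (p h : C) : Gamma p -> jac p h = Cmult (eta_deriv p) h.
Proof.
  intros Hp. destruct (cauchy_riemann_Gamma p Hp) as [E1 E2].
  destruct h. unfold jac, lin2, eta_deriv, Cmult; simpl. rewrite E1, E2. f_equal; ring.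
Qed.

Lemma jac_det_Gamma (p : C) : Gamma p -> jac_det p = Cmod (eta_deriv p) * Cmod (eta_deriv p).
Proof.
  intros Hp. destruct (cauchy_riemann_Gamma p Hp) as [E1 E2].
  rewrite Cmod_sqr. unfold jac_det, eta_deriv; simpl. rewrite E1, E2. ring.
Qed.

Lemma gam_Gamma (t : R) : Gamma (gam t) /\ eta (gam t) = circ t.
Proof. apply etainv_right, onT_circ. Qed.

Lemma gam_surj (q : C) : Gamma q -> exists t, -PI <= t <= PI /\ gam t = q.
Proof.
  intros Hq. assert (H : onT (eta q)) by (apply eta_Gamma_onto_T; eauto).
  destruct (onT_circ_surj _ H) as [t [Ht E]].
  exists t; split; [exact Ht |]. unfold gam; rewrite E; apply etainv_left, Hq.
Qed.

Lemma gam_continuous (t : R) :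
  continuity_pt (fun s => fst (gam s)) t /\ continuity_pt (fun s => snd (gam s)) t.
Proof.
  destruct (etainv_differentiable t) as [H1 H2].
  split; apply ex_derive_continuity_pt; assumption.
Qed.

Lemma gam_periodic (t : R) : gam (t + 2 * PI) = gam t.
Proof. unfold gam; rewrite circ_plus_2PI; reflexivity. Qed.

Lemma eta_flat (p : C) : Gamma p -> eta_deriv p = 0%C ->
  forall eps, 0 < eps -> exists r, 0 < r /\ forall z, box p r z ->
    Cmod (Cminus (eta z) (eta p)) <= eps * Cmod (Cminus z p).
Proof.
  intros Hp E eps He. destruct (eta_strict_deriv p eps He) as [r [Hr H]].
  exists r; split; [exact Hr |]. intros z Hz.
  specialize (H p z (box_center p r Hr) Hz). rewrite jac_Gamma, E, Cmult_0_l in H by exact Hp.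
  replace (Cminus (Cminus (eta z) (eta p)) 0%C) with (Cminus (eta z) (eta p)) in H
    by (unfold Cminus; ring).
  exact H.
Qed.

(* If [eta'(p) = 0], then [eta] is flat at [p], so [cos] and [sin], the components of
   [eta o gam], would both have zero derivative at the parameter of [p]. *)
Lemma eta_deriv_neq_0 (p : C) : Gamma p -> eta_deriv p <> 0%C.
Proof.
  intros Hp E.
  destruct (gam_surj p Hp) as [t0 [_ Ht0]]. destruct (etainv_differentiable t0) as [D1 D2].
  assert (Hcomp : forall (pr : C -> R) (f : R -> R),
            (forall x, Rabs (pr x) <= Cmod x) -> (forall x y, pr (Cminus x y) = pr x - pr y) ->
            (forall t, f t = pr (circ t)) -> derivable_pt_lim f t0 0).
  { intros pr f Hpr Hlin Hf.
    apply (derivable_pt_lim_ext (fun t => pr (eta (fst (gam t), snd (gam t))))).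
    { intros t. rewrite <- surjective_pairing, Hf, (proj2 (gam_Gamma t)). reflexivity. }
    apply (derivable_pt_lim_comp_flat (fun z => pr (eta z))); [exact D1 | exact D2 |].
    rewrite <- surjective_pairing, Ht0.
    intros eps He. destruct (eta_flat p Hp E eps He) as [r [Hr H]].
    exists r; split; [exact Hr |]. intros z Hz. rewrite <- Hlin.
    eapply Rle_trans; [apply Hpr | apply H, Hz]. }
  assert (Dc := Hcomp fst cos Rabs_fst_le_Cmod Cminus_fst (fun t => eq_refl)).
  assert (Ds := Hcomp snd sin Rabs_snd_le_Cmod Cminus_snd (fun t => eq_refl)).
  generalize (uniqueness_limite _ _ _ _ Dc (derivable_pt_lim_cos t0))
    (uniqueness_limite _ _ _ _ Ds (derivable_pt_lim_sin t0)) (sin2_cos2 t0).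
  unfold Rsqr. intros. nra.
Qed.

Definition similar_at (p : C) (r : R) (a : C) : Prop :=
  r <= Cmod a <= / r /\ near_similarity eta a (box p r) /\ (forall z, box p r z -> 0 < jac_det z).

Lemma similar_at_shrink (p q a : C) (r r' : R) : 0 < r' <= r ->
  (forall z, box q r' z -> box p r z) -> similar_at p r a -> similar_at q r' a.
Proof.
  intros Hr Hsub [[H1 H2] [H3 H4]]. split; [split |]; [lra | |].
  - eapply Rle_trans; [exact H2 | apply Rinv_le_contravar; lra].
  - split; [apply (near_similarity_subset _ _ _ _ Hsub H3) | intros z Hz; apply H4, Hsub, Hz].
Qed.

Lemma eta_similar_locally (p : C) : Gamma p -> exists r, 0 < r /\ similar_at p r (eta_deriv p).
Proof.
  intros Hp. set (A := Cmod (eta_deriv p)).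
  assert (HA : 0 < A) by (apply Cmod_gt_0, eta_deriv_neq_0, Hp).
  destruct (eta_strict_deriv p (A / 2)) as [r1 [Hr1 H1]]; [lra |].
  assert (Hdet : 0 < jac_det p) by (rewrite jac_det_Gamma by exact Hp; fold A; nra).
  destruct (continuous_box jac_det p (jac_det_continuous p) _ Hdet) as [r2 [Hr2 H2]].
  set (r := Rmin (Rmin r1 r2) (Rmin A (/ A))).
  assert (Hr : 0 < r) by (unfold r; repeat apply Rmin_pos; auto; apply Rinv_0_lt_compat, HA).
  assert (Hr12 : r <= Rmin r1 r2) by apply Rmin_l.
  assert (HrA : r <= Rmin A (/ A)) by apply Rmin_r.
  exists r; split; [exact Hr |]. unfold similar_at; fold A. split; [split | split].
  - eapply Rle_trans; [exact HrA | apply Rmin_l].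
  - rewrite <- (Rinv_inv A). apply Rinv_le_contravar; [exact Hr |].
    eapply Rle_trans; [exact HrA | apply Rmin_r].
  - intros z w Hz Hw. rewrite <- jac_Gamma by exact Hp. apply H1.
    + apply (box_weaken _ _ r); [eapply Rle_trans; [exact Hr12 | apply Rmin_l] | exact Hz].
    + apply (box_weaken _ _ r); [eapply Rle_trans; [exact Hr12 | apply Rmin_l] | exact Hw].
  - intros z Hz.
    assert (Hz2 : box p r2 z).
    { apply (box_weaken _ _ r); [eapply Rle_trans; [exact Hr12 | apply Rmin_r] | exact Hz]. }
    specialize (H2 z Hz2). apply Rabs_def2 in H2. lra.
Qed.

(* A Lebesgue number for the cover of [Gamma] by the boxes of [eta_similar_locally]. *)
Lemma eta_similar_uniformly : exists d, 0 < d /\ forall q, Gamma q -> exists a, similar_at q d a.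
Proof.
  set (good := fun p r => 0 < r /\ (Gamma p -> similar_at p r (eta_deriv p))).
  assert (Hgood : forall p, exists r, good p r).
  { intros p. destruct (classic (Gamma p)) as [Hp | Hp].
    - destruct (eta_similar_locally p Hp) as [r [Hr H]]. exists r; split; auto.
    - exists 1; split; [lra | tauto]. }
  set (rad := fun p => epsilon (inhabits 1) (good p)).
  assert (Hrad : forall p, good p (rad p)) by (intros p; apply epsilon_spec, Hgood).
  destruct (curve_lebesgue_number gam gam_continuous (-PI) PI rad) as [d0 [Hd0 Hleb]].
  { intros t _; apply Hrad. }
  exists (d0 / 2); split; [lra |].
  intros q Hq. destruct (gam_surj q Hq) as [t [Ht <-]].
  destruct (Hleb t Ht) as [s [_ [Hbox Hd0s]]].
  set (p := gam s) in *.
  destruct (Hrad p) as [Hr Hsim]. specialize (Hsim (proj1 (gam_Gamma s))).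
  exists (eta_deriv p). apply (similar_at_shrink p _ _ (rad p)); [lra | | exact Hsim].
  intros z Hz. apply (box_weaken _ _ (rad p / 2 + d0 / 2)); [lra |].
  apply (box_trans p (gam t) z); assumption.
Qed.

Lemma eta_separation (d : R) : 0 < d -> exists sg, 0 < sg /\ forall q q', Gamma q -> Gamma q' ->
  Cmod (Cminus (eta q) (eta q')) < sg -> box q d q'.
Proof.
  intros Hd.
  destruct (periodic_curve_separation gam gam_continuous gam_periodic d Hd) as [sg [Hsg H]].
  exists sg; split; [exact Hsg |]. intros q q' Hq Hq' Hc.
  destruct (gam_surj q Hq) as [t [Ht <-]]; destruct (gam_surj q' Hq') as [t' [Ht' <-]].
  apply H; [exact Ht | exact Ht' |].
  rewrite <- (proj2 (gam_Gamma t)), <- (proj2 (gam_Gamma t')). exact Hc.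
Qed.

Lemma Gamma_bounded : exists B, forall q, Gamma q -> Cmod q <= B.
Proof.
  destruct (curve_bounded gam gam_continuous (-PI) PI) as [B H].
  { generalize PI_RGT_0; lra. }
  exists B; intros q Hq.
  destruct (gam_surj q Hq) as [t [Ht <-]]. apply H, Ht.
Qed.

Section Neighbourhood.

Variables (d sg B rho : R).
Hypothesis d_pos : 0 < d.
Hypothesis eta_similar : forall q, Gamma q -> exists a, similar_at q d a.
Hypothesis sg_pos : 0 < sg.
Hypothesis eta_separates : forall q q', Gamma q -> Gamma q' ->
  Cmod (Cminus (eta q) (eta q')) < sg -> box q (d / 4) q'.
Hypothesis Gamma_le_B : forall q, Gamma q -> Cmod q <= B.
Hypothesis rho_pos : 0 < rho.
Hypothesis rho_le_d : rho <= d / 8.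
Hypothesis rho_le_sg : 12 * rho <= d * sg.

Definition lip_local := 3 / (2 * d).

Definition tube (z : C) : Prop := exists q, Gamma q /\ box q rho z.
Definition tube_image (w : C) : Prop := exists z, tube z /\ eta z = w.

Lemma lip_local_pos : 0 < lip_local.
Proof. unfold lip_local; apply Rdiv_lt_0_compat; lra. Qed.

Lemma eta_local_bilipschitz (q z w : C) : Gamma q -> box q d z -> box q d w ->
  d / 2 * Cmod (Cminus w z) <= Cmod (Cminus (eta w) (eta z)) <= lip_local * Cmod (Cminus w z).
Proof.
  intros Hq Hz Hw. destruct (eta_similar q Hq) as [a [[Ha1 Ha2] [Hsim _]]].
  destruct (near_similarity_bilipschitz _ _ _ z w Hsim Hz Hw) as [H1 H2].
  assert (HD := Cmod_ge_0 (Cminus w z)).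
  split.
  - eapply Rle_trans; [| exact H1]. apply Rmult_le_compat_r; lra.
  - eapply Rle_trans; [exact H2 |]. apply Rmult_le_compat_r; [exact HD |].
    unfold lip_local. replace (3 / (2 * d)) with (3 / 2 * / d) by (field; lra). lra.
Qed.

Lemma Gamma_sub_tube (q : C) : Gamma q -> tube q.
Proof. intros Hq. exists q; split; [exact Hq | apply box_center, rho_pos]. Qed.

Lemma tube_open : open tube.
Proof.
  intros z [q [Hq Hz]]. destruct (box_interior q z rho Hz) as [e [He H]].
  exists (mkposreal e He). intros y Hy. exists q; split; [exact Hq | apply H, ball_box, Hy].
Qed.

Lemma tube_bounded (z : C) : tube z -> Cmod z <= B + 2 * rho.
Proof.
  intros [q [Hq Hz]].
  replace z with (Cplus (Cminus z q) q) by (unfold Cminus; ring).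
  eapply Rle_trans; [apply Cmod_triangle |].
  generalize (box_Cmod_lt _ _ _ Hz) (Gamma_le_B q Hq); lra.
Qed.

Lemma eta_close_to_Gamma (q z : C) : Gamma q -> box q rho z ->
  Cmod (Cminus (eta z) (eta q)) <= 2 * lip_local * rho.
Proof.
  intros Hq Hz.
  destruct (eta_local_bilipschitz q q z Hq (box_center q d d_pos) (box_weaken q z rho d ltac:(lra) Hz))
    as [_ H].
  eapply Rle_trans; [exact H |]. generalize lip_local_pos (box_Cmod_lt _ _ _ Hz); nra.
Qed.

Lemma eta_bilipschitz_close (z w : C) : tube z -> box z (d / 2) w ->
  d / 2 * Cmod (Cminus w z) <= Cmod (Cminus (eta w) (eta z)) <= lip_local * Cmod (Cminus w z).
Proof.
  intros [q [Hq Hz]] Hw. apply (eta_local_bilipschitz q); [exact Hq | |].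
  - apply (box_weaken _ _ rho); [lra | exact Hz].
  - apply (box_weaken _ _ (rho + d / 2)); [lra | apply (box_trans q z w); assumption].
Qed.

(* Far apart points of [tube] lie near far apart points of [Gamma], whose images are
   [sg]-separated. *)
Lemma eta_far_lower (z w : C) : tube z -> tube w -> ~ box z (d / 2) w ->
  sg / 2 <= Cmod (Cminus (eta z) (eta w)).
Proof.
  intros [q [Hq Hz]] [q' [Hq' Hw]] Hfar.
  assert (Hsep : sg <= Cmod (Cminus (eta q) (eta q'))).
  { apply Rnot_lt_le; intros Hlt. apply Hfar.
    apply (box_weaken _ _ (rho + d / 4 + rho)); [lra |].
    apply (box_trans z q' w); [apply (box_trans z q q') |]; auto using box_sym. }
  generalize (Cmod_minus_triangle (eta q) (eta z) (eta q'))
    (Cmod_minus_triangle (eta z) (eta w) (eta q'))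
    (eta_close_to_Gamma q z Hq Hz) (eta_close_to_Gamma q' w Hq' Hw).
  rewrite (Cmod_minus_sym (eta q) (eta z)), (Cmod_minus_sym (eta w) (eta q')).
  assert (2 * lip_local * rho * 2 <= sg / 2).
  { unfold lip_local. apply (Rmult_le_reg_r d); [exact d_pos |].
    replace (2 * (3 / (2 * d)) * rho * 2 * d) with (6 * rho) by (field; lra). lra. }
  lra.
Qed.

Lemma eta_tube_bounded_diff (z w : C) : tube z -> tube w ->
  Cmod (Cminus (eta z) (eta w)) <= 2 + 4 * lip_local * rho.
Proof.
  intros [q [Hq Hz]] [q' [Hq' Hw]].
  assert (Hq1 : Cmod (eta q) = 1) by (apply eta_Gamma_onto_T; eauto).
  assert (Hq1' : Cmod (eta q') = 1) by (apply eta_Gamma_onto_T; eauto).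
  generalize (Cmod_minus_triangle (eta z) (eta q) (eta w))
    (Cmod_minus_triangle (eta q) (eta q') (eta w)) (Cmod_minus_le (eta q) (eta q'))
    (eta_close_to_Gamma q z Hq Hz) (eta_close_to_Gamma q' w Hq' Hw).
  rewrite (Cmod_minus_sym (eta q') (eta w)). lra.
Qed.

Definition c_low : R := Rmin (d / 2) (sg / (4 * (B + 2 * rho))).
Definition c_up : R := Rmax lip_local (2 * (2 + 4 * lip_local * rho) / d).

Lemma B_rho_pos : 0 < B + 2 * rho.
Proof.
  destruct (gam_Gamma 0) as [H _]. generalize (Gamma_le_B _ H) (Cmod_ge_0 (gam 0)); lra.
Qed.

Lemma c_low_pos : 0 < c_low.
Proof.
  unfold c_low. apply Rmin_pos; [lra |]. apply Rdiv_lt_0_compat; generalize B_rho_pos; lra.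
Qed.

Lemma c_up_pos : 0 < c_up.
Proof. unfold c_up. eapply Rlt_le_trans; [apply lip_local_pos | apply Rmax_l]. Qed.

Lemma eta_bilipschitz_tube (z w : C) : tube z -> tube w ->
  c_low * Cmod (Cminus z w) <= Cmod (Cminus (eta z) (eta w)) <= c_up * Cmod (Cminus z w).
Proof.
  intros Hz Hw. assert (HD := Cmod_ge_0 (Cminus z w)). assert (HL := lip_local_pos).
  destruct (classic (box z (d / 2) w)) as [Hnear | Hfar].
  - destruct (eta_bilipschitz_close z w Hz Hnear) as [H1 H2].
    rewrite (Cmod_minus_sym w z), (Cmod_minus_sym (eta w) (eta z)) in H1, H2. split.
    + eapply Rle_trans; [| exact H1]. apply Rmult_le_compat_r; [exact HD | apply Rmin_l].
    + eapply Rle_trans; [exact H2 |]. apply Rmult_le_compat_r; [exact HD | apply Rmax_l].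
  - assert (Hd2 : d / 2 <= Cmod (Cminus z w)).
    { rewrite Cmod_minus_sym. apply not_box_Cmod_ge, Hfar. }
    split.
    + assert (Hzw : Cmod (Cminus z w) <= 2 * (B + 2 * rho)).
      { eapply Rle_trans; [apply Cmod_minus_le |]. generalize (tube_bounded z Hz) (tube_bounded w Hw); lra. }
      assert (HBr := B_rho_pos).
      apply (Rle_trans _ (sg / (4 * (B + 2 * rho)) * (2 * (B + 2 * rho)))).
      * apply Rmult_le_compat; [left; apply c_low_pos | exact HD | apply Rmin_r | exact Hzw].
      * replace (sg / (4 * (B + 2 * rho)) * (2 * (B + 2 * rho))) with (sg / 2) by (field; lra).
        apply eta_far_lower; assumption.
    + eapply Rle_trans; [apply eta_tube_bounded_diff; assumption |].
      apply (Rle_trans _ (2 * (2 + 4 * lip_local * rho) / d * Cmod (Cminus z w))).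
      * apply (Rle_trans _ (2 * (2 + 4 * lip_local * rho) / d * (d / 2))); [right; field; lra |].
        apply Rmult_le_compat_l; [apply Rdiv_le_0_compat; [nra | lra] | exact Hd2].
      * apply Rmult_le_compat_r; [exact HD | apply Rmax_r].
Qed.

Lemma eta_injective_tube (z w : C) : tube z -> tube w -> eta z = eta w -> z = w.
Proof.
  intros Hz Hw E. destruct (eta_bilipschitz_tube z w Hz Hw) as [H _].
  rewrite E, Cmod_minus_diag in H. apply Cmod_minus_eq_0.
  generalize c_low_pos (Cmod_ge_0 (Cminus z w)); nra.
Qed.

Lemma tube_image_open : open tube_image.
Proof.
  intros w0 [z0 [[q [Hq Hz0]] <-]].
  destruct (box_interior q z0 rho Hz0) as [e [He Hsub]].
  destruct (eta_similar q Hq) as [a [[Ha1 _] [Hsim _]]].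
  assert (Ha : a <> 0%C) by (apply Cmod_gt_0; lra).
  assert (Hdisk : forall z, Cmod (Cminus z z0) <= e / 2 -> box q rho z)
    by (intros z Hz; apply Hsub, Cmod_lt_box; lra).
  assert (Hpos : 0 < e * d / 8) by (apply Rdiv_lt_0_compat; [apply Rmult_lt_0_compat |]; lra).
  exists (mkposreal _ Hpos). intros w Hw. apply ball_box, box_Cmod_lt in Hw; simpl in Hw.
  destruct (near_similarity_surjective eta a z0 w (e / 2) Ha) as [z [Hz <-]].
  - apply (near_similarity_subset _ _ _ _ (fun z Hz => box_weaken q z rho d ltac:(lra) (Hdisk z Hz))).
    exact Hsim.
  - assert (Cmod (Cminus w (eta z0)) < e * d / 4) by lra. nra.
  - exists z; split; [exists q; split; [exact Hq | apply Hdisk, Hz] | reflexivity].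
Qed.

Lemma onT_sub_tube_image (w : C) : onT w -> tube_image w.
Proof.
  intros Hw. destruct (etainv_right w Hw) as [H1 H2].
  exists (etainv w); split; [apply Gamma_sub_tube, H1 | exact H2].
Qed.

Lemma tube_image_box (w0 : C) : tube_image w0 -> exists r, 0 < r /\ forall w, box w0 r w -> tube_image w.
Proof.
  intros H. destruct (tube_image_open w0 H) as [r Hr].
  exists r; split; [apply cond_pos | intros w Hw; apply Hr, ball_box, Hw].
Qed.

Definition tube_inv (w : C) : C := epsilon (@inhabits C (0, 0)) (fun z => tube z /\ eta z = w).

Lemma tube_inv_spec (w : C) : tube_image w -> tube (tube_inv w) /\ eta (tube_inv w) = w.
Proof. intros H. apply (epsilon_spec (@inhabits C (0, 0)) (fun z => tube z /\ eta z = w) H). Qed.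

Lemma tube_inv_eta (z : C) : tube z -> tube_inv (eta z) = z.
Proof.
  intros Hz. destruct (tube_inv_spec (eta z) (ex_intro _ z (conj Hz eq_refl))) as [H1 H2].
  apply eta_injective_tube; assumption.
Qed.

Lemma tube_inv_lipschitz (w w' : C) : tube_image w -> tube_image w' ->
  c_low * Cmod (Cminus (tube_inv w) (tube_inv w')) <= Cmod (Cminus w w').
Proof.
  intros Hw Hw'. destruct (tube_inv_spec w Hw) as [H1 E1]; destruct (tube_inv_spec w' Hw') as [H2 E2].
  destruct (eta_bilipschitz_tube _ _ H1 H2) as [H _]. rewrite E1, E2 in H. exact H.
Qed.

Lemma tube_inv_continuous (w0 : C) : tube_image w0 -> continuous tube_inv w0.
Proof.
  intros H0. apply filterlim_locally; intros eps.
  destruct (tube_image_box w0 H0) as [r [Hr Hloc]]. assert (Hc := c_low_pos).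
  assert (Hpos : 0 < Rmin r (eps * c_low / 2)).
  { apply Rmin_pos; [exact Hr | apply Rdiv_lt_0_compat; [apply Rmult_lt_0_compat; [apply cond_pos |] |]; lra]. }
  exists (mkposreal _ Hpos). intros w Hw. apply ball_box in Hw; simpl in Hw.
  apply ball_box, Cmod_lt_box.
  assert (L1 := tube_inv_lipschitz w w0 (Hloc w (box_weaken _ _ _ _ (Rmin_l _ _) Hw)) H0).
  assert (L2 := box_Cmod_lt _ _ _ Hw). assert (L3 := Rmin_r r (eps * c_low / 2)).
  apply (Rmult_lt_reg_l c_low); [exact Hc | lra].
Qed.

Lemma tube_jac_det_pos (z : C) : tube z -> 0 < jac_det z.
Proof.
  intros [q [Hq Hz]]. destruct (eta_similar q Hq) as [a [_ [_ Hdet]]].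
  apply Hdet, (box_weaken _ _ rho); [lra | exact Hz].
Qed.

(* With [z = tube_inv w] and [z0 = tube_inv w0], the linearization
   [w - w0 = jac z0 (z - z0) + E] inverts to [z - z0 = jac_inv z0 (w - w0 - E)],
   and [E] is small by [eta_strict_deriv]. *)
Lemma tube_inv_frechet (w0 : C) : tube_image w0 -> forall eps, 0 < eps -> exists r, 0 < r /\
  forall w, box w0 r w ->
    Cmod (Cminus (Cminus (tube_inv w) (tube_inv w0)) (jac_inv (tube_inv w0) (Cminus w w0))) <= eps * Cmod (Cminus w w0).
Proof.
  intros H0 eps He. destruct (tube_inv_spec w0 H0) as [Hz0 Ez0]. set (z0 := tube_inv w0) in *.
  assert (Hc := c_low_pos).
  destruct (lin2_inv_residual_le (ux z0) (uy z0) (vx z0) (vy z0)) as [K [HK Hres]].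
  { apply Rgt_not_eq, tube_jac_det_pos, Hz0. }
  destruct (eta_strict_deriv z0 (eps * c_low / K)) as [r1 [Hr1 H1]].
  { apply Rdiv_lt_0_compat; [apply Rmult_lt_0_compat |]; assumption. }
  destruct (tube_image_box w0 H0) as [r0 [Hr0 Hloc]].
  exists (Rmin r0 (c_low * r1 / 2)); split.
  { apply Rmin_pos; [exact Hr0 | apply Rdiv_lt_0_compat; [apply Rmult_lt_0_compat |]; lra]. }
  intros w Hw.
  assert (Hw' : tube_image w) by (apply Hloc, (box_weaken _ _ _ _ (Rmin_l _ _) Hw)).
  destruct (tube_inv_spec w Hw') as [_ Ew].
  assert (Hgw : c_low * Cmod (Cminus (tube_inv w) z0) <= Cmod (Cminus w w0)) by (apply tube_inv_lipschitz; auto).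
  assert (Hbox : box z0 r1 (tube_inv w)).
  { apply Cmod_lt_box, (Rmult_lt_reg_l c_low); [exact Hc |].
    generalize (box_Cmod_lt _ _ _ Hw) (Rmin_r r0 (c_low * r1 / 2)); lra. }
  specialize (H1 z0 (tube_inv w) (box_center z0 r1 Hr1) Hbox). rewrite Ew, Ez0 in H1.
  eapply Rle_trans; [apply Hres |].
  apply (Rle_trans _ (K * (eps * c_low / K * Cmod (Cminus (tube_inv w) z0)))).
  - apply Rmult_le_compat_l; [lra | exact H1].
  - replace (K * (eps * c_low / K * Cmod (Cminus (tube_inv w) z0)))
      with (eps * (c_low * Cmod (Cminus (tube_inv w) z0))) by (field; lra).
    apply Rmult_le_compat_l; [lra | exact Hgw].
Qed.


Lemma tube_inv_partials (w0 : C) : tube_image w0 ->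
  (is_derive (fun t => fst (tube_inv (t, snd w0))) (fst w0) (vy (tube_inv w0) / jac_det (tube_inv w0)) /\
   is_derive (fun t => fst (tube_inv (fst w0, t))) (snd w0) (- uy (tube_inv w0) / jac_det (tube_inv w0))) /\
  (is_derive (fun t => snd (tube_inv (t, snd w0))) (fst w0) (- vx (tube_inv w0) / jac_det (tube_inv w0)) /\
   is_derive (fun t => snd (tube_inv (fst w0, t))) (snd w0) (ux (tube_inv w0) / jac_det (tube_inv w0))).
Proof. intros H0. apply lin2_frechet_partials, tube_inv_frechet, H0. Qed.

Lemma tube_inv_component_C1 (pr : C -> R) (Na Nb : C -> R) :
  (forall w, tube_image w ->
     is_derive (fun t => pr (tube_inv (t, snd w))) (fst w) (Na (tube_inv w) / jac_det (tube_inv w)) /\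
     is_derive (fun t => pr (tube_inv (fst w, t))) (snd w) (Nb (tube_inv w) / jac_det (tube_inv w))) ->
  (forall z, continuous Na z) -> (forall z, continuous Nb z) ->
  C1_on_R tube_image (fun w => pr (tube_inv w)).
Proof.
  intros Hd HNa HNb w Hw. destruct (Hd w Hw) as [Dx Dy].
  assert (Hcont : forall N, (forall z, continuous N z) ->
            continuous (fun y => N (tube_inv y) / jac_det (tube_inv y)) w).
  { intros N HN. apply (continuous_comp tube_inv (fun z => N z / jac_det z)); [apply tube_inv_continuous, Hw |].
    apply (continuous_mult N (fun z => / jac_det z)); [apply HN |].
    apply (continuous_comp jac_det Rinv); [apply jac_det_continuous |].
    apply continuous_Rinv. apply Rgt_not_eq, tube_jac_det_pos, (tube_inv_spec w Hw). }
  assert (Hloc : forall P : C -> Prop, (forall y, tube_image y -> P y) -> locally w P).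
  { intros P HP. destruct (tube_image_box w Hw) as [r [Hr H]].
    exists (mkposreal r Hr); intros y Hy. apply HP, H, ball_box, Hy. }
  split; [eexists; exact Dx | split; [eexists; exact Dy | split]].
  - apply (continuous_ext_loc _ (fun y => Na (tube_inv y) / jac_det (tube_inv y))); [| apply Hcont, HNa].
    apply Hloc; intros y Hy. symmetry. apply is_derive_unique, (Hd y Hy).
  - apply (continuous_ext_loc _ (fun y => Nb (tube_inv y) / jac_det (tube_inv y))); [| apply Hcont, HNb].
    apply Hloc; intros y Hy. symmetry. apply is_derive_unique, (Hd y Hy).
Qed.

Lemma tube_inv_C1 : C1_on tube_image tube_inv.
Proof.
  split.
  - apply (tube_inv_component_C1 fst vy (fun z => - uy z));
      [intros w Hw; exact (proj1 (tube_inv_partials w Hw)) | intros z | intros z];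
      destruct (partials_continuous z) as (H1 & H2 & H3 & H4); [| apply (continuous_opp uy)];
      assumption.
  - apply (tube_inv_component_C1 snd (fun z => - vx z) ux);
      [intros w Hw; exact (proj2 (tube_inv_partials w Hw)) | intros z | intros z];
      destruct (partials_continuous z) as (H1 & H2 & H3 & H4); [apply (continuous_opp vx) |];
      assumption.
Qed.

Lemma straightening_tube : straightening_neighbourhood Gamma eta tube.
Proof.
  split; [exact tube_open |]. split; [exact Gamma_sub_tube |]. split; [exact eta_injective_tube |].
  split; [exact tube_image_open |]. split; [exact onT_sub_tube_image |]. split.
  - exists tube_inv; split; [exact tube_inv_eta | exact tube_inv_C1].
  - exists c_low, c_up; split; [exact c_low_pos | split; [exact c_up_pos | exact eta_bilipschitz_tube]].
Qed.

End Neighbourhood.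

Lemma eta_straightening : exists tube, straightening_neighbourhood Gamma eta tube.
Proof.
  destruct eta_similar_uniformly as [d [Hd Hsim]].
  destruct (eta_separation (d / 4)) as [sg [Hsg Hsep]]; [lra |].
  destruct Gamma_bounded as [B HB].
  set (rho := Rmin (d / 8) (d * sg / 12)).
  assert (Hrho : 0 < rho) by (apply Rmin_pos; [lra | apply Rdiv_lt_0_compat; [nra | lra]]).
  exists (tube rho). apply (straightening_tube d sg B rho); auto.
  - apply Rmin_l.
  - generalize (Rmin_r (d / 8) (d * sg / 12)); fold rho; lra.
Qed.

End Straightening.

Lemma dist_set_mem (Gamma : C -> Prop) (z : C) : Gamma z -> dist_set Gamma z = 0.
Proof.
  intros Hz. unfold dist_set.
  set (E := fun r => exists w, Gamma w /\ r = Cmod (Cminus z w)).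
  destruct (Glb_Rbar_correct E) as [H1 H2].
  assert (Hle : Rbar_le (Glb_Rbar E) 0).
  { apply H1. exists z; split; [exact Hz | rewrite Cmod_minus_diag; reflexivity]. }
  assert (Hge : Rbar_le 0 (Glb_Rbar E)).
  { apply H2. intros x [w [_ ->]]. apply Cmod_ge_0. }
  destruct (Glb_Rbar E); simpl in *; try contradiction. lra.
Qed.

Lemma pseudoanalytic_dbar_Gamma (a : R) (Gamma : C -> Prop) (f F : C -> C) (z : C) :
  pseudoanalytic_ext a Gamma f F -> Gamma z -> dbar F z = (0, 0).
Proof.
  intros [_ [_ [Cf HCf]]] Hz. specialize (HCf z).
  rewrite dist_set_mem in HCf by exact Hz.
  unfold hpow in HCf. destruct (Rle_dec 0 0) as [_ | n]; [| lra].
  apply Cmod_eq_0, Rle_antisym; [lra | apply Cmod_ge_0].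
Qed.

Theorem lemma2 (alpha : R) (Gamma : C -> Prop) (psi eta : C -> C) :
  0 < alpha < 1 ->
  jordan_C1a alpha Gamma psi ->
  C1a_Gamma alpha psi eta ->
  (forall w, onT w <-> exists z, Gamma z /\ eta z = w) ->
  (exists etainv : C -> C,
      (forall w, onT w -> Gamma (etainv w) /\ eta (etainv w) = w) /\
      (forall z, Gamma z -> etainv (eta z) = z) /\
      (forall t, differentiable_curve_at (lift etainv) t)) ->
  pseudoanalytic_ext alpha Gamma eta eta ->
  exists U : C -> Prop,
    open U /\ (forall z, Gamma z -> U z) /\
    (forall z w, U z -> U w -> eta z = eta w -> z = w) /\
    open (fun w => exists z, U z /\ eta z = w) /\
    (forall w, onT w -> exists z, U z /\ eta z = w) /\
    (exists g : C -> C,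
        (forall z, U z -> g (eta z) = z) /\
        C1_on (fun w => exists z, U z /\ eta z = w) g) /\
    (exists c Cc : R, 0 < c /\ 0 < Cc /\
       forall z w, U z -> U w ->
         c * Cmod (Cminus z w) <= Cmod (Cminus (eta z) (eta w)) /\
         Cmod (Cminus (eta z) (eta w)) <= Cc * Cmod (Cminus z w)).
Proof.
  intros _ _ _ Honto [etainv [Hright [Hleft Hdiff]]] Hext.
  apply (eta_straightening Gamma eta etainv); try assumption.
  - apply Hext.
  - intros z Hz. apply (pseudoanalytic_dbar_Gamma alpha Gamma eta eta z Hext Hz).
Qed.
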